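(* Let $n=p\,q^{\alpha}$ with $\alpha\ge 1$ an integer and $p,q$ distinct primes such that $q\not\equiv 1\pmod 3$. If $n$ divides $\sigma_3(n)$, then $n$ is an even perfect number and $n\neq 28$.
   Context: $\sigma_3(n)=\sum_{d\mid n,\ d>0} d^3$. A positive integer $n$ is perfect if $\sum_{d\mid n,\ d>0} d=2n$. *)

From mathcomp Require Import all_boot.
Set Implicit Arguments. Unset Strict Implicit. Unset Printing Implicit Defensive.

Definition sigma (k n : nat) : nat := \sum_(d <- divisors n) d ^ k.

Definition sigma3 (n : nat) : nat := sigma 3 n.

Definition perfect (n : nat) : Prop := 0 < n /\ sigma 1 n = 2 * n.

(* Since sigma_3 is multiplicative, sigma3 (p * q^a) = (1 + p^3) * sigma3 (q^a), and the two
   factors are coprime to q^a and to p respectively: the hypothesis splits into q^a | p^3 + 1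
   and p | sigma3 (q^a).  Modulo a prime q = 2 (mod 3) the only cube root of -1 is -1, so
   q^a | p + 1; for q = 3 one still gets 3^(a-1) | p + 1.  Write p + 1 = k N with N this power
   of q and Q = q^(a+1) = c N.  As sigma3 (q^a) divides Q^3 - 1, the prime p divides Q - 1 or
   Q^2 + Q + 1.  In the first case k = c or p < c.  In the second the cofactor is j N - 1, giving
   k j = c^2 + t and t N = c + k + j, which forces N to be small: finitely many cases remain.
   Hence p + 1 = q^(a+1), parity forces q = 2, and n = p 2^a is Euclid's perfect number for the
   Mersenne prime p; q = 3 only yields n = 6, and n = 28 fails since 28 does not divide
   sigma3 28. *)

From mathcomp Require Import all_boot all_algebra zify.
Set Implicit Arguments. Unset Strict Implicit. Unset Printing Implicit Defensive.
Import GRing.Theory.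

Lemma sigma_prime_pow k q a : prime q ->
  sigma k (q ^ a) = \sum_(i < a.+1) (q ^ k) ^ i.
Proof.
move=> q_pr; have q_gt1 := prime_gt1 q_pr.
have divisorsE : perm_eq (divisors (q ^ a)) [seq q ^ i | i <- index_iota 0 a.+1].
  apply: uniq_perm; rewrite ?divisors_uniq ?map_inj_uniq ?iota_uniq //.
    exact: expnI.
  move=> d; rewrite -dvdn_divisors ?expn_gt0 ?prime_gt0 //.
  apply/idP/mapP => [/(dvdn_pfactor _ _ q_pr) [i le_ia ->] | [i]].
    by exists i; rewrite // mem_index_iota.
  by rewrite mem_index_iota => /andP [_ lt_ia] ->; rewrite dvdn_exp2l.
rewrite /sigma (perm_big _ divisorsE) big_map big_mkord.
by apply: eq_bigr => i _; rewrite -!expnM mulnC.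
Qed.

Lemma sigma_prime_mul k p m : prime p -> ~~ (p %| m) ->
  sigma k (p * m) = (1 + p ^ k) * sigma k m.
Proof.
move=> p_pr p_ndvd; have p_gt0 := prime_gt0 p_pr.
have m_gt0 : 0 < m by case: m p_ndvd => [|m]; rewrite ?dvdn0.
have divisorsE : perm_eq (divisors (p * m)) (divisors m ++ map (muln p) (divisors m)).
  apply: uniq_perm; rewrite ?divisors_uniq //.
    rewrite cat_uniq divisors_uniq map_inj_uniq ?divisors_uniq /= ?andbT; last first.
      by move=> x y /eqP; rewrite eqn_pmul2l // => /eqP.
    apply/hasPn => _ /mapP [d d_dvd ->]; apply: contra p_ndvd.
    by rewrite -dvdn_divisors //; apply: dvdn_trans; apply: dvdn_mulr.
  move=> d; rewrite mem_cat -!dvdn_divisors ?muln_gt0 ?p_gt0 //.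
  apply/idP/orP => [d_dvd | [d_dvd | /mapP [e]]].
  - have [/dvdnP [e def_d] | p_ndvd_d] := boolP (p %| d).
      right; apply/mapP; exists e; last by rewrite def_d mulnC.
      by rewrite -dvdn_divisors // -(dvdn_pmul2l p_gt0) mulnC -def_d.
    by left; rewrite -(Gauss_dvdr _ (_ : coprime d p)) // coprime_sym prime_coprime.
  - exact: dvdn_mull.
  - by rewrite -dvdn_divisors // => e_dvd ->; rewrite dvdn_pmul2l.
rewrite /sigma (perm_big _ divisorsE) big_cat big_map /= mulnDl mul1n big_distrr.
by congr (_ + _); apply: eq_bigr => d _; rewrite expnMn.
Qed.

Lemma coprime_sigma_prime_pow k q a : prime q -> 0 < k -> coprime q (sigma k (q ^ a)).
Proof.
move=> q_pr k_gt0; rewrite sigma_prime_pow // big_ord_recl expn0.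
have /dvdnP [s ->] : q %| \sum_(i < a) (q ^ k) ^ (bump 0 i).
  apply: dvdn_sum => i _; rewrite expnS dvdn_mulr //.
  by rewrite -(prednK k_gt0) expnS dvdn_mulr.
by rewrite -coprime_modr addnC modnMDl coprime_modr coprimen1.
Qed.

Lemma dvdn_sigma3_split p q a : prime p -> prime q -> p != q ->
  p * q ^ a %| sigma3 (p * q ^ a) -> q ^ a %| p ^ 3 + 1 /\ p %| sigma 3 (q ^ a).
Proof.
move=> p_pr q_pr neq_pq.
have p_ndvd : ~~ (p %| q ^ a) by rewrite Euclid_dvdX // dvdn_prime2 // negb_and neq_pq.
rewrite /sigma3 sigma_prime_mul // addnC => n_dvd; split.
  have cop_qa : coprime (q ^ a) (sigma 3 (q ^ a)).
    by rewrite coprimeXl // coprime_sigma_prime_pow.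
  by rewrite -(Gauss_dvdl _ cop_qa); exact: dvdn_trans (dvdn_mull _ _) n_dvd.
have cop_p : coprime p (p ^ 3 + 1).
  by rewrite -coprime_modr expnSr modnMDl coprime_modr coprimen1.
by rewrite -(Gauss_dvdr _ cop_p); exact: dvdn_trans (dvdn_mulr _ _) n_dvd.
Qed.

Section PrimeFieldCubes.
Local Open Scope ring_scope.

Lemma prime_dvdn_cube_succ p q :
  prime q -> (q %% 3 = 2)%N -> (q %| p ^ 3 + 1)%N -> (q %| p + 1)%N.
Proof.
move=> q_pr q_mod3; have charFq := pchar_Fp q_pr.
rewrite !(dvdn_pcharf charFq) !natrD natrX; set x : 'F_q := p%:R.
rewrite !addr_eq0 => /eqP x3.
have xq : x ^+ q = x.
  by rewrite -natrX -[LHS](Fp_nat_mod q_pr) fermat_little // Fp_nat_mod.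
have x_neq0 : x != 0.
  by apply: contra_eq_neq x3 => ->; rewrite expr0n /= eq_sym oppr_eq0 oner_eq0.
have : (-1) ^+ (q %/ 3) * x = 1.
  apply: (mulIf x_neq0); rewrite mul1r -mulrA -expr2 -x3 -exprM -exprD mulnC.
  by rewrite -[X in (_ + X)%N]q_mod3 -divn_eq.
rewrite -signr_odd; case: (odd _); rewrite ?expr1 ?expr0 ?mulN1r ?mul1r.
  by move=> nx1; rewrite -nx1 opprK.
by move=> x1; rewrite -x3 x1 expr1n.
Qed.

End PrimeFieldCubes.

Lemma cube_succ_factor p : p ^ 3 + 1 = (p + 1) * (p * p.-1 + 1).
Proof. by case: p => [|p] //=; nia. Qed.

Lemma pow_dvdn_cube_succ p q a :
  prime q -> q %% 3 = 2 -> q ^ a %| p ^ 3 + 1 -> q ^ a %| p + 1.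
Proof.
move=> q_pr q_mod3 qa_dvd.
suff cop : coprime q (p * p.-1 + 1).
  by move: qa_dvd; rewrite cube_succ_factor Gauss_dvdl // coprimeXl.
rewrite prime_coprime //; apply/negP => q_dvd.
have q_dvd_succ : q %| p + 1.
  by apply: prime_dvdn_cube_succ; rewrite // cube_succ_factor dvdn_mull.
have : q %| 3 * p.
  have -> : 3 * p = (p + 1) * (p + 1) - (p * p.-1 + 1).
    by case: p {qa_dvd q_dvd q_dvd_succ} => //= p; lia.
  by rewrite dvdn_sub ?dvdn_mull.
rewrite Euclid_dvdM // dvdn_prime2 // => /orP [/eqP q3 | q_dvd_p].
  by rewrite q3 in q_mod3.
by move: q_dvd_succ; rewrite dvdn_addr // dvdn1 => /eqP q1; rewrite q1 in q_pr.
Qed.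

Lemma three_pow_dvdn_cube_succ p a : 3 ^ a.+1 %| p ^ 3 + 1 -> 3 ^ a %| p + 1.
Proof.
move=> dvd.
have /dvdnP [m def_m] : 3 %| p + 1.
  have /dvdn_trans/(_ dvd) : 3 %| 3 ^ a.+1 by rewrite dvdn_exp.
  by rewrite /dvdn -modnDml (fermat_little p (isT : prime 3)) modnDml.
have -> : p + 1 = 3 * m by rewrite def_m mulnC.
have cubeE : p ^ 3 + 1 = 3 * (3 * m) * (3 * m * m.-1 + 1).
  by case: m def_m => [|m] def_m; [rewrite addn1 in def_m | nia].
have cop : coprime (3 ^ a.+1) (3 * m * m.-1 + 1).
  by rewrite coprimeXl // -coprime_modr -mulnA mulnC modnMDl.
by move: dvd; rewrite cubeE Gauss_dvdl // expnS dvdn_pmul2l.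
Qed.

Lemma prime_dvdn_sigma3_prime_pow p q a : prime p -> prime q ->
  p %| sigma 3 (q ^ a) -> p %| (q ^ a.+1).-1 \/ p %| (q ^ a.+1) ^ 2 + q ^ a.+1 + 1.
Proof.
move=> p_pr q_pr p_dvd; set Q := q ^ a.+1.
have cube_predE : (Q ^ 3).-1 = Q.-1 * (Q ^ 2 + Q + 1).
  by rewrite predn_exp !big_ord_recr big_ord0 /= expn0 expn1; congr (_ * _); lia.
have : p %| (Q ^ 3).-1.
  by rewrite -expnM mulnC expnM predn_exp -sigma_prime_pow // dvdn_mull.
by rewrite cube_predE Euclid_dvdM // => /orP.
Qed.

Lemma pred_mul_dvdn_cases p k c N : 0 < N -> 1 < c -> p + 1 = k * N ->
  p %| (c * N).-1 -> k = c \/ p < c.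
Proof.
move=> N_gt0 c_gt1 def_p /dvdnP [m def_m].
have m_gt0 : 0 < m by case: m def_m => [|m] //=; nia.
have mE : c * N + m = m * k * N + 1 by nia.
case: (ltngtP (m * k) c) => [lt_mk_c | lt_c_mk | eq_mk_c].
- have : m * k * N + N <= c * N by rewrite -mulSnr leq_mul2r lt_mk_c orbT.
  lia.
- right; have : c * N + N <= m * k * N by rewrite -mulSnr leq_mul2r lt_c_mk orbT.
  nia.
- left; have m1 : m = 1 by nia.
  by move: eq_mk_c; rewrite m1 mul1n.
Qed.

(* The cofactor of p = k N - 1 is j N - 1; expand (k N - 1) (j N - 1) and divide by N. *)
Lemma trinomial_dvdn_cofactors p k c N : 0 < N -> p + 1 = k * N ->
  p %| (c * N) ^ 2 + c * N + 1 -> exists j t, k * j = c ^ 2 + t /\ t * N = c + k + j.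
Proof.
move=> N_gt0 def_p /dvdnP [r def_r].
have /dvdnP [j def_j] : N %| r + 1.
  have : N %| r * (p + 1) by rewrite def_p mulnA dvdn_mull.
  have -> : r * (p + 1) = (r + 1) + c * N * (c * N + 1) by nia.
  by rewrite dvdn_addl // dvdn_mulr // dvdn_mull.
have prodE : (p + 1) * (r + 1) = k * N * (j * N) by rewrite def_p def_j.
have kjE : k * j * N = c ^ 2 * N + c + k + j.
  by apply/eqP; rewrite -(eqn_pmul2r N_gt0); apply/eqP; nia.
have lt_c2_kj : c ^ 2 < k * j.
  by rewrite -(ltn_pmul2r N_gt0) kjE; case: k def_p {prodE kjE} => [|k]; lia.
exists j, (k * j - c ^ 2); split; first lia.
by rewrite mulnBl kjE; lia.
Qed.

(* Either k = 1 or j = 1, or else (k - 2) (j - 2) >= 0 bounds k + j by k j. *)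
Lemma cofactor_bounds c k j t N : 0 < c -> k * j = c ^ 2 + t -> t * N = c + k + j ->
  t * N = t + (c ^ 2 + c + 1) \/ c + 4 <= t * N /\ 2 * (t * N) <= c ^ 2 + 2 * c + 4 + t.
Proof.
move=> c_gt0 kjE tNE.
have k_gt0 : 0 < k by case: (posnP k) kjE => [-> | //]; lia.
have j_gt0 : 0 < j by case: (posnP j) kjE => [-> | //]; lia.
have [k1 | k_gt1] := leqP k 1.
  have k1' : k = 1 by lia.
  by left; rewrite k1' mul1n in kjE tNE; lia.
have [j1 | j_gt1] := leqP j 1.
  have j1' : j = 1 by lia.
  by left; rewrite j1' muln1 in kjE tNE; lia.
by right; nia.
Qed.

Lemma prime_succ_prime p : prime p -> prime (p + 1) -> p = 2.
Proof.
move=> p_pr; case: (even_prime p_pr) => // p_odd /even_prime [p2 |].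
  by move: p_pr; rewrite (_ : p = 1) //; lia.
by rewrite addn1 /= p_odd.
Qed.

Lemma mul_pred_dvdn_succ_cases p k q : 1 < q -> p + 1 = k * q -> p %| q + 1 ->
  k = q \/ k = 1.
Proof.
move=> q_gt1 def_p p_dvd; have le_p_q := dvdn_leq (leq_addl q 1) p_dvd.
case: k def_p => [|[|[|k]]] def_p; [lia | by right | left; lia |].
by have := leq_mul (isT : 3 <= k.+3) (leqnn q); lia.
Qed.

Lemma mul_eq_pred_add_cases w k q : 1 < q -> w * (k * q) = q.-1 + w + k ->
  k = q \/ k = 1.
Proof.
move=> q_gt1 wkqE; have [k_le1 | k_gt1] := leqP k 1.
  by right; case: k k_le1 wkqE => [|[|]] //=; rewrite ?mul0n ?muln0; lia.
have kq_ge : k + q <= k * q by clear -k_gt1 q_gt1; nia.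
case: w wkqE => [|[|w]] wkqE; first by rewrite mul0n in wkqE; lia.
  left; case: k k_gt1 kq_ge wkqE => [|[|[|k]]] //= _ kq_ge wkqE; first lia.
  by have := leq_mul (leqnn k.+3) q_gt1; lia.
have := leq_mul (leqnn w) (leq_trans (leq_add k_gt1 q_gt1) kq_ge).
by rewrite !mulSn in wkqE; lia.
Qed.

Lemma mul_pred_dvdn_trinomial_cases p k q : 1 < q -> p + 1 = k * q ->
  p %| q * q.-1 + 1 -> k = q \/ k = 1.
Proof.
move=> q_gt1 def_p /dvdnP [e def_e].
have /dvdnP [w def_w] : q %| e + 1.
  have : q %| e * (p + 1) by rewrite def_p mulnA dvdn_mull.
  have -> : e * (p + 1) = q * q.-1 + (e + 1) by rewrite mulnDr muln1 -def_e; lia.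
  by rewrite dvdn_addr // dvdn_mulr.
have ekE : e * k = q.-1 + w.
  apply/eqP; rewrite -(eqn_pmul2r (ltnW q_gt1)) mulnDl -def_w -mulnA -def_p.
  by apply/eqP; rewrite mulnDr muln1 -def_e; lia.
apply: (@mul_eq_pred_add_cases w) => //.
by rewrite mulnCA -def_w mulnDr muln1 mulnC ekE.
Qed.

Lemma prime_mul_pred_dvdn_cube_succ p k q : prime p -> 1 < q -> p + 1 = k * q ->
  p %| q ^ 3 + 1 -> k = q \/ k = 1.
Proof.
move=> p_pr q_gt1 def_p; rewrite cube_succ_factor Euclid_dvdM // => /orP [].
  exact: mul_pred_dvdn_succ_cases.
exact: mul_pred_dvdn_trinomial_cases.
Qed.

Lemma trinomial_eq_pow_cases q a t : 1 < q -> 1 < a ->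
  t * q ^ a = t + (q ^ 2 + q + 1) -> q = 2 /\ a = 3.
Proof.
move=> q_gt1 a_gt1 tE.
have t_gt0 : 0 < t by case: (posnP t) tE => [-> | //]; lia.
have le_qa : q ^ a <= q ^ 2 + q + 2.
  have : 0 < q ^ a by rewrite expn_gt0 ltnW.
  by move: tE t_gt0; move: (q ^ a) (q ^ 2) => N Q; clear; nia.
case: a a_gt1 tE le_qa => [|[|[|a]]] // _ tE le_qa.
  exfalso; rewrite !expnS expn0 muln1 in tE.
  case: t t_gt0 tE => [|[|t]] // _ tE; first lia.
  case: q q_gt1 tE {le_qa} => [|[|[|q]]] // _ tE; first lia.
  by clear -tE; nia.
have q2 : q = 2.
  have := leq_trans (leq_pexp2l (ltnW q_gt1) (isT : 3 <= a.+3)) le_qa.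
  by rewrite !expnS expn0 !muln1 => le_q3; clear -q_gt1 le_q3; nia.
subst q; split => //; have : 2 ^ a.+3 <= 2 ^ 3 by [].
by rewrite leq_exp2l //; case: a {tE le_qa}.
Qed.

Lemma trinomial_pow_bound_false q a t : 1 < q -> q != 3 -> 1 < a ->
  q + 4 <= t * q ^ a -> 2 * (t * q ^ a) <= q ^ 2 + 2 * q + 4 + t -> False.
Proof.
move=> q_gt1 q_neq3 a_gt1 lo hi.
have le_q2 : q ^ 2 <= q ^ a := leq_pexp2l (ltnW q_gt1) a_gt1.
have t_gt0 : 0 < t by case: (posnP t) lo => [-> | //]; lia.
have le_sq : q ^ 2 <= 2 * q + 5.
  by move: lo hi le_q2; move: (q ^ a) (q ^ 2) => N Q; clear -t_gt0; nia.
have q2 : q = 2.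
  move: le_sq; rewrite !expnS expn0 muln1.
  by case: q q_gt1 q_neq3 {lo hi le_q2} => [|[|[|[|q]]]] //= _ _; nia.
subst q; rewrite (_ : 2 ^ 2 = 4) // in hi.
case: a a_gt1 lo hi {le_q2} => [|[|[|a]]] // _ lo hi.
  by rewrite (_ : 2 ^ 2 = 4) // in lo hi; lia.
have := leq_pexp2l (isT : 0 < 2) (isT : 3 <= a.+3).
by move: (2 ^ a.+3) hi => N hi le_8; clear -t_gt0 hi le_8; nia.
Qed.

Lemma cofactor_eq_of_dvdn_sigma3 p k q a : prime p -> prime q -> q != 3 -> 1 < a ->
  p + 1 = k * q ^ a -> p %| sigma 3 (q ^ a) -> k = q.
Proof.
move=> p_pr q_pr q_neq3 a_gt1 def_p p_dvd.
have q_gt1 := prime_gt1 q_pr; have N_gt0 : 0 < q ^ a by rewrite expn_gt0 ltnW.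
have [p_dvd1 | p_dvd2] := prime_dvdn_sigma3_prime_pow p_pr q_pr p_dvd.
  rewrite expnS in p_dvd1.
  case: (pred_mul_dvdn_cases N_gt0 q_gt1 def_p p_dvd1) => // lt_p_q.
  have k_gt0 : 0 < k by case: (posnP k) def_p => // ->; rewrite addn1.
  have := leq_pmull (q ^ a) k_gt0; rewrite -def_p.
  have : q ^ 1 < q ^ a by rewrite ltn_exp2l.
  by rewrite expn1; move: (q ^ a) lt_p_q => N; clear; lia.
rewrite [q ^ a.+1]expnS in p_dvd2.
have [j [t [kjE tNE]]] := trinomial_dvdn_cofactors N_gt0 def_p p_dvd2.
case: (cofactor_bounds (prime_gt0 q_pr) kjE tNE) => [| [lo hi]].
  case/trinomial_eq_pow_cases => // q2 a3; subst q a.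
  have : p \in primes (sigma 3 (2 ^ 3)) by rewrite mem_primes p_pr p_dvd /sigma unlock.
  rewrite (_ : sigma 3 (2 ^ 3) = 585); last by rewrite /sigma unlock.
  have -> : primes 585 = [:: 3; 5; 13] by [].
  rewrite (_ : 2 ^ 3 = 8) // in def_p.
  by rewrite !inE => /or3P [] /eqP p_eq; move: def_p; rewrite p_eq; lia.
by case: (trinomial_pow_bound_false q_gt1 q_neq3 a_gt1 lo hi).
Qed.

Lemma nine_cofactors_small_check :
  all (fun b => all (fun t => all (fun k => k * (t * 3 ^ b - (9 + k)) != 81 + t)
    (iota 0 61)) (iota 0 21)) (iota 1 3).
Proof. by vm_compute. Qed.

Lemma nine_cofactors_false b k j t : 0 < b ->
  k * j = 9 ^ 2 + t -> t * 3 ^ b = 9 + k + j -> False.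
Proof.
move=> b_gt0 kjE tNE.
have N_odd : odd (3 ^ b) by rewrite oddX orbT.
have N_ge3 : 3 <= 3 ^ b by rewrite -{1}(expn1 3) leq_exp2l.
case: (cofactor_bounds (isT : 0 < 9) kjE tNE) => [tE | [lo hi]].
  by have := congr1 odd tE; rewrite oddD oddM N_odd /=; case: (odd t).
rewrite (_ : 9 ^ 2 + 2 * 9 + 4 = 103) // in hi.
have t_gt0 : 0 < t by case: (posnP t) lo => // ->; rewrite mul0n.
have le_N_tN := leq_pmull (3 ^ b) t_gt0.
have le_3t_tN : t * 3 <= t * 3 ^ b by rewrite leq_mul2l N_ge3 orbT.
have le_tN : t * 3 ^ b <= 61 by lia.
have b_lt4 : b < 4.
  rewrite ltnNge; apply/negP => /(leq_pexp2l (isT : 0 < 3)) le_81.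
  by move: le_81; rewrite (_ : 3 ^ 4 = 81) //; lia.
have t_lt21 : t < 21 by lia.
have k_lt61 : k < 61 by lia.
have jE : j = t * 3 ^ b - (9 + k) by lia.
have := nine_cofactors_small_check.
move=> /allP /(_ b); rewrite mem_iota b_gt0 b_lt4 => /(_ isT).
move=> /allP /(_ t); rewrite mem_iota t_lt21 => /(_ isT).
move=> /allP /(_ k); rewrite mem_iota k_lt61 => /(_ isT).
by rewrite -jE kjE eqxx.
Qed.

Lemma sigma3_three_pow_cases p a : prime p -> 0 < a ->
  3 ^ a %| p ^ 3 + 1 -> p %| sigma 3 (3 ^ a) -> p = 2 /\ a = 1.
Proof.
move=> p_pr; case: a => [//|b] _ dvd3 p_dvd.
have /dvdnP [k def_p] := three_pow_dvdn_cube_succ dvd3.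
case: b => [|[|b]] in dvd3 p_dvd def_p *.
- have : p \in primes (sigma 3 (3 ^ 1)) by rewrite mem_primes p_pr p_dvd /sigma unlock.
  rewrite (_ : sigma 3 (3 ^ 1) = 28); last by rewrite /sigma unlock.
  have -> : primes 28 = [:: 2; 7] by [].
  by rewrite !inE => /orP [] /eqP p_eq //; rewrite p_eq in dvd3.
- have : p \in primes (sigma 3 (3 ^ 2)) by rewrite mem_primes p_pr p_dvd /sigma unlock.
  rewrite (_ : sigma 3 (3 ^ 2) = 757); last by rewrite /sigma unlock.
  have -> : primes 757 = [:: 757] by [].
  by rewrite !inE => /eqP p_eq; move: def_p; rewrite p_eq expn1; lia.
exfalso; set N := 3 ^ b.+2 in def_p.
have N_gt0 : 0 < N by rewrite expn_gt0.
have N_ge9 : 9 <= N by change (3 ^ 2 <= 3 ^ b.+2); rewrite leq_exp2l.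
have N_odd : odd N by rewrite oddX.
have k_gt0 : 0 < k by case: (posnP k) def_p => // ->; rewrite addn1.
have QE : 3 ^ b.+4 = 9 * N by rewrite /N !expnS !mulnA.
have [p_dvd1 | p_dvd2] := prime_dvdn_sigma3_prime_pow p_pr (isT : prime 3) p_dvd.
  rewrite QE in p_dvd1.
  case: (pred_mul_dvdn_cases N_gt0 (isT : 1 < 9) def_p p_dvd1) => [k9 | lt_p_9].
    have := congr1 odd def_p; rewrite k9 oddD oddM N_odd /= => p_even.
    case: (even_prime p_pr) => [p2 | p_odd]; last by rewrite p_odd in p_even.
    by move: def_p; rewrite p2 k9; lia.
  have := leq_pmull N k_gt0; rewrite -def_p => le_N.
  by move: p_pr; rewrite (_ : p = 8) //; lia.
rewrite QE in p_dvd2.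
have [j [t [kjE tNE]]] := trinomial_dvdn_cofactors N_gt0 def_p p_dvd2.
exact: nine_cofactors_false (ltn0Sn b.+1) kjE tNE.
Qed.

Lemma succ_eq_pow_of_dvdn_sigma3 p q a : prime p -> prime q -> q != 3 -> 0 < a ->
  q ^ a %| p + 1 -> p %| sigma 3 (q ^ a) -> p + 1 = q ^ a.+1.
Proof.
move=> p_pr q_pr q_neq3 a_gt0 /dvdnP [k def_p] p_dvd.
suff k_eq : k = q by rewrite def_p k_eq expnS mulnC.
case: a a_gt0 def_p p_dvd => [//|[|a]] _ def_p p_dvd; last first.
  exact: cofactor_eq_of_dvdn_sigma3 p_pr q_pr q_neq3 _ def_p p_dvd.
move: p_dvd; rewrite sigma_prime_pow // !big_ord_recr big_ord0 /= expn0 expn1 addnC.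
rewrite expn1 in def_p => p_dvd.
case: (prime_mul_pred_dvdn_cube_succ p_pr (prime_gt1 q_pr) def_p p_dvd) => // k1.
rewrite k1 mul1n in def_p.
by move: q_neq3; rewrite -def_p (prime_succ_prime p_pr) // def_p.
Qed.

Lemma prime_succ_eq_pow p q a : prime p -> prime q -> q != 3 ->
  p + 1 = q ^ a.+1 -> q = 2.
Proof.
move=> p_pr q_pr q_neq3 def_p.
case: (even_prime p_pr) => [p2 | p_odd].
  have : q %| 3 by rewrite (_ : 3 = q ^ a.+1) ?dvdn_exp // -def_p p2.
  by rewrite dvdn_prime2 // => /eqP q3; rewrite q3 in q_neq3.
case: (even_prime q_pr) => // q_odd.
by have := congr1 odd def_p; rewrite addn1 /= oddX q_odd p_odd.
Qed.

Lemma mersenne_perfect p a : prime p -> p + 1 = 2 ^ a.+1 ->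
  perfect (p * 2 ^ a) /\ ~~ odd (p * 2 ^ a).
Proof.
move=> p_pr def_p.
have p_odd : odd p.
  case: (even_prime p_pr) => // p2.
  by have := congr1 odd def_p; rewrite p2 oddX.
have a_gt0 : 0 < a by case: a def_p => // def_p; move: p_pr; rewrite (_ : p = 1) //; lia.
split; last by rewrite oddM oddX eqn0Ngt a_gt0 andbF.
split; first by rewrite muln_gt0 prime_gt0 // expn_gt0.
have p_ndvd : ~~ (p %| 2 ^ a).
  by rewrite Euclid_dvdX // dvdn_prime2 //; apply: contraTN p_odd => /andP [/eqP ->].
have sum_pow2 : \sum_(i < a.+1) 2 ^ i = p.
  by have := predn_exp 2 a.+1; rewrite mul1n -def_p addn1.
rewrite sigma_prime_mul // sigma_prime_pow // expn1 sum_pow2 addnC def_p expnS.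
by rewrite -mulnA [p * _]mulnC.
Qed.

Theorem theorem1p7 (p q alpha : nat) :
  prime p -> prime q -> p != q -> 1 <= alpha ->
  q %% 3 != 1 ->
  p * q ^ alpha %| sigma3 (p * q ^ alpha) ->
  perfect (p * q ^ alpha) /\ ~~ odd (p * q ^ alpha) /\ p * q ^ alpha != 28.
Proof.
move=> p_pr q_pr neq_pq alpha_gt0 q_mod3 n_dvd.
have [qa_dvd p_dvd] := dvdn_sigma3_split p_pr q_pr neq_pq n_dvd.
have [m [e [m_pr m_succ nE]]] :
    exists m e, [/\ prime m, m + 1 = 2 ^ e.+1 & p * q ^ alpha = m * 2 ^ e].
  have [q3 | q_neq3] := eqVneq q 3.
    rewrite q3 in qa_dvd p_dvd *.
    by have [-> ->] := sigma3_three_pow_cases p_pr alpha_gt0 qa_dvd p_dvd; exists 3, 1.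
  have q_mod3_2 : q %% 3 = 2.
    have : ~~ (3 %| q) by rewrite dvdn_prime2 // eq_sym.
    by rewrite /dvdn; move: q_mod3; have := ltn_pmod q (isT : 0 < 3); lia.
  have p_succ := succ_eq_pow_of_dvdn_sigma3 p_pr q_pr q_neq3 alpha_gt0
    (pow_dvdn_cube_succ q_pr q_mod3_2 qa_dvd) p_dvd.
  have q2 := prime_succ_eq_pow p_pr q_pr q_neq3 p_succ.
  by exists p, alpha; rewrite -q2.
have [perfect_n even_n] := mersenne_perfect m_pr m_succ.
rewrite nE in n_dvd *; do !split => //.
by apply: contraTneq n_dvd => ->; rewrite /sigma3 /sigma unlock.
Qed.
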